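(* Let $\mathcal L$ be a finite atomic lattice with set of atoms $\mathfrak A(\mathcal L)$, and let $\mathcal G$ be a building set in $\mathcal L$. Let $\mathcal I\subseteq \mathbb Z[\{x_G\}_{G\in\mathcal G}]$ be the ideal generated by the monomials $\prod_{i=1}^t x_{G_i}$ for all subsets $\{G_1,\dots,G_t\}\subseteq\mathcal G$ that are not nested, together with the linear forms $\sum_{G\in\mathcal G,\,G\geq H} x_G$ for all atoms $H\in\mathfrak A(\mathcal L)$. Then $\mathcal I$ is also generated by the following polynomials: (a) $h_{\mathcal S}=\prod_{G\in\mathcal S}x_G$ for every subset $\mathcal S\subseteq\mathcal G$ that is not nested; (b) $g_{\mathcal H,B}=\prod_{i=1}^k x_{A_i}\,\Big(\sum_{G\in\mathcal G,\,G\geq B}x_G\Big)^{d}$, where $\mathcal H$ is a nested set, $A_1,\dots,A_k$ are the maximal elements of $\mathcal H$, $B\in\mathcal G$ with $B>A:=\bigvee_{i=1}^kA_i$ (the join of the empty set being $\hat 0$), and $d=d(A,B)$.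
   Context: A lattice is a finite poset in which every subset has a join $\vee$ and a meet $\wedge$; $\hat 0$ is its least element. It is atomic if every element is a join of atoms. For $X\le Y$ write $[X,Y]=\{Z: X\le Z\le Y\}$ and for $\mathcal G\subseteq\mathcal L$ write $\mathcal G_{\le X}=\{G\in\mathcal G: G\le X\}$. A subset $\mathcal G\subseteq\mathcal L\setminus\{\hat 0\}$ is a building set if for every $X\in\mathcal L\setminus\{\hat0\}$, with $\{G_1,\dots,G_k\}$ the set of maximal elements of $\mathcal G_{\le X}$, there is a poset isomorphism $\varphi_X:\prod_{i=1}^k[\hat0,G_i]\to[\hat0,X]$ with $\varphi_X(\hat0,\dots,G_i,\dots,\hat0)=G_i$ for all $i$. A subset $\mathcal S\subseteq\mathcal G$ is nested if for every set of pairwise incomparable elements $G_1,\dots,G_t\in\mathcal S$ with $t\ge2$, the join $G_1\vee\dots\vee G_t$ does not belong to $\mathcal G$. For $X\le Y$ in an atomic lattice, $d(X,Y)$ is the minimal number $d$ of atoms $H_1,\dots,H_d$ such that $Y=X\vee\bigvee_{i=1}^dH_i$. *)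

From HB Require Import structures.
From mathcomp Require Import all_boot all_order all_algebra.
From mathcomp Require Import mpoly.

Set Implicit Arguments.
Unset Strict Implicit.
Unset Printing Implicit Defensive.

Import Order.Theory GRing.Theory.

Section LatticeDefs.
Local Open Scope order_scope.

Context {disp : Order.disp_t} {L : finTBLatticeType disp}.

Definition atoms : {set L} :=
  [set a : L | (\bot < a) && [forall z : L, ~~ ((\bot < z) && (z < a))]].

Definition atomic : Prop :=
  forall X : L, exists S : {set L}, S \subset atoms /\ X = \join_(a in S) a.

Definition maxelts (S : {set L}) : {set L} :=
  [set A in S | [forall Z in S, (A <= Z) ==> (Z == A)]].

(* the product poset prod_{G in M} [\bot, G], encoded as finite functions
   f : L -> L with f G in [\bot, G] for G in M and f G = \bot otherwise,
   ordered componentwise *)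
Definition prodint (M : {set L}) : {set {ffun L -> L}} :=
  [set f : {ffun L -> L} |
     [forall G : L, if G \in M then f G <= G else f G == \bot]].

Definition unitvec (G : L) : {ffun L -> L} :=
  [ffun H : L => if H == G then G else \bot].

Definition building_set (Gs : {set L}) : Prop :=
  \bot \notin Gs /\
  forall X : L, X != \bot ->
    let M := maxelts [set G in Gs | G <= X] in
    exists phi : {ffun L -> L} -> L,
      [/\ {in prodint M &, forall f g,
              (phi f <= phi g) = [forall G : L, f G <= g G]},
          [set phi f | f in prodint M] = [set Z : L | Z <= X]
        & forall G, G \in M -> phi (unitvec G) = G].

Definition nested (Gs S : {set L}) : Prop :=
  S \subset Gs /\
  forall T : {set L}, T \subset S -> 1 < #|T|
    -> {in T &, forall G H, G != H -> ~~ ((G <= H) || (H <= G))}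
    -> (\join_(G in T) G) \notin Gs.

(* d(X,Y): the minimal number of atoms H_1..H_d with Y = X v H_1 v ... v H_d
   (the big-min default #|L| is never attained below when X <= Y in an
   atomic lattice, since then a witness set of atoms exists) *)
Definition dist (X Y : L) : nat :=
  \big[minn/#|L|]_(S : {set L} | (S \subset atoms) &&
                                 (Y == X `|` \join_(a in S) a)) #|S|.

End LatticeDefs.

Section PolyDefs.
Local Open Scope ring_scope.

Context {disp : Order.disp_t} {L : finTBLatticeType disp} (Gs : {set L}).

(* the polynomial ring Z[{x_G}_{G in Gs}]: variables indexed by 'I_#|Gs|,
   the i-th variable corresponding to the i-th element of enum Gs *)
Definition PR := {mpoly int[#|Gs|]}.

Definition xv (G : L) : PR :=
  if [pick i : 'I_#|Gs| | enum_val i == G] is Some i then 'X_i else 0.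

Definition in_ideal (S : PR -> Prop) (p : PR) : Prop :=
  exists s : seq (PR * PR),
    (forall c, c \in s -> S c.2) /\ p = \sum_(c <- s) c.1 * c.2.

Definition monom (S : {set L}) : PR := \prod_(G in S) xv G.

Definition upsum (H : L) : PR :=
  \sum_(G in Gs | (H <= G)%O) xv G.

Definition gens_orig (p : PR) : Prop :=
  (exists S : {set L}, S \subset Gs /\ ~ nested Gs S /\ p = monom S) \/
  (exists H : L, H \in atoms /\ p = upsum H).

Definition gens_new (p : PR) : Prop :=
  (exists S : {set L}, S \subset Gs /\ ~ nested Gs S /\ p = monom S) \/
  (exists (Hs : {set L}) (B : L),
     nested Gs Hs /\ B \in Gs /\
     let A := (\join_(Ai in maxelts Hs) Ai)%O in
     (A < B)%O /\ p = monom (maxelts Hs) * upsum B ^+ dist A B).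

End PolyDefs.

(* The linear form of an atom H is the generator g_{∅,H}, since d(\bot, H) = 1.
   Conversely, g_{H,B} lies in I by induction on d = d(A, B).  Take an atom a in a
   shortest expression B = A `|` a `|` ...; modulo the linear form of a, the sum of the
   x_G over G >= B equals minus the sum of the x_G over G >= a with G not >= B.  For
   such G, B `|` G is in the building set (G and B share the atom a), and x_G x_G' is
   in I whenever G' >= B and G' not >= G, so modulo I we may replace B by B `|` G.
   Then either H ∪ {G} is not nested, or it is nested with join A `|` G < B `|` G at
   distance at most d - 1. *)

From mathcomp Require Import all_boot all_order all_algebra.
From mathcomp Require Import mpoly ring.
From Stdlib Require Import Classical.

Set Implicit Arguments.
Unset Strict Implicit.
Unset Printing Implicit Defensive.

Import Order.Theory GRing.Theory.

Section MaximalElements.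
Local Open Scope order_scope.
Context {disp : Order.disp_t} {L : finTBLatticeType disp}.
Implicit Types (S : {set L}) (x y : L).

Lemma maxelts_sub S : maxelts S \subset S.
Proof. by apply/subsetP => x; rewrite inE => /andP []. Qed.

(* A maximal element is found by maximizing the size of the principal ideal. *)
Lemma exists_maxelts_ge S x : x \in S -> exists2 y, y \in maxelts S & x <= y.
Proof.
move=> xS; have xP : (x \in S) && (x <= x) by rewrite xS lexx.
case: (@arg_maxnP _ x (fun z => (z \in S) && (x <= z))
                   (fun z => #|[set w : L | w <= z]|) xP) => y /andP [yS xy] ymax.
exists y => //.
rewrite inE yS; apply/forallP => z; apply/implyP => zS; apply/implyP => yz.
rewrite eq_le yz andbT; apply: contraT => zNy.
suff : (#|[set w : L | (w <= y)%O]| < #|[set w : L | (w <= z)%O]|)%N.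
  by rewrite ltnNge; move: (ymax z); rewrite zS (le_trans xy yz) /= => /(_ isT) ->.
apply: proper_card; apply/properP; split.
  by apply/subsetP => w; rewrite !inE => wy; apply: le_trans wy yz.
by exists z; rewrite !inE.
Qed.

Lemma joins_maxelts S : \join_(x in maxelts S) x = \join_(x in S) x.
Proof.
apply/eqP; rewrite eq_le le_joins ?maxelts_sub //=.
apply/joinsP => x xS; have [y ym xy] := exists_maxelts_ge xS.
exact: le_trans xy (joins_sup _ ym).
Qed.

Lemma maxelts_incomparable S x y : x \in maxelts S -> y \in maxelts S ->
  x != y -> ~~ ((x <= y) || (y <= x)).
Proof.
rewrite !inE => /andP [xS /forallP xmax] /andP [yS /forallP ymax] xNy.
apply/negP => /orP [xy|yx].
  by move: (xmax y); rewrite yS xy /= eq_sym (negbTE xNy).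
by move: (ymax x); rewrite xS yx /= (negbTE xNy).
Qed.

End MaximalElements.

Section NestedSets.
Local Open Scope order_scope.
Context {disp : Order.disp_t} {L : finTBLatticeType disp} (Gs : {set L}).
Implicit Types (S T : {set L}).

Lemma nested0 : nested Gs set0.
Proof.
split; first exact: sub0set.
by move=> T; rewrite subset0 => /eqP ->; rewrite cards0.
Qed.

Lemma nested_sub S T : T \subset S -> nested Gs S -> nested Gs T.
Proof.
move=> TS [SGs nS]; split; first exact: subset_trans TS SGs.
by move=> U UT; apply: nS; apply: subset_trans UT TS.
Qed.

Lemma nested_join_mem S : \bot \notin Gs -> nested Gs S ->
  \join_(x in S) x \in Gs -> \join_(x in S) x \in S.
Proof.
move=> botNGs nS; rewrite -joins_maxelts => joinGs.
have [cM|] := ltnP 1 #|maxelts S|.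
  have := nS.2 _ (maxelts_sub S) cM (@maxelts_incomparable _ _ S).
  by rewrite joinGs.
rewrite leq_eqVlt ltnS leqn0 cards_eq0 => /orP [/cards1P [m eM]|/eqP M0].
  by move: (maxelts_sub S); rewrite eM big_set1 sub1set.
by move: joinGs botNGs; rewrite M0 big_set0 => ->.
Qed.

End NestedSets.

Section BuildingSets.
Local Open Scope order_scope.
Context {disp : Order.disp_t} {L : finTBLatticeType disp} (Gs : {set L}).
Hypothesis Gs_building : building_set Gs.

Lemma bot_notin_building_set : \bot \notin Gs.
Proof. exact: Gs_building.1. Qed.

Lemma unitvec_prodint (M : {set L}) (G : L) : G \in M -> unitvec G \in prodint M.
Proof.
move=> GM; rewrite inE; apply/forallP => H; rewrite ffunE.
have [-> | _] := eqVneq H G; first by rewrite GM lexx.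
by case: ifP; rewrite ?le0x.
Qed.

Lemma maxelts_lower_bound_bot (X F1 F2 h : L) : X != \bot ->
    F1 \in maxelts [set G in Gs | G <= X] -> F2 \in maxelts [set G in Gs | G <= X] ->
  F1 != F2 -> h <= F1 -> h <= F2 -> h = \bot.
Proof.
move=> X0; have [phi [phi_mono phi_onto phi_unit]] := Gs_building.2 X X0.
set M := maxelts _ in phi_mono phi_onto phi_unit * => F1M F2M F12 hF1 hF2.
have phi_surj Z : Z <= X -> exists2 f, f \in prodint M & Z = phi f.
  by move=> ZX; apply/imsetP; rewrite phi_onto inE.
have F1X : F1 <= X by move: F1M => /(subsetP (maxelts_sub _)); rewrite inE => /andP [].
have [k kM eh] := phi_surj h (le_trans hF1 F1X).
have [z zM ez] := phi_surj \bot (le0x _).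
move: hF1 hF2; rewrite eh -(phi_unit F1) // -(phi_unit F2) //.
rewrite !phi_mono ?unitvec_prodint // => /forallP kF1 /forallP kF2.
apply/eqP; rewrite -lex0 ez phi_mono //; apply/forallP => G.
move: (kF1 G) (kF2 G); rewrite !ffunE.
have [-> | _] := eqVneq G F1; last by rewrite lex0 => /eqP -> _; apply: le0x.
by rewrite (negbTE F12) lex0 => _ /eqP ->; apply: le0x.
Qed.

Lemma building_set_join (G1 G2 h : L) : G1 \in Gs -> G2 \in Gs ->
  h != \bot -> h <= G1 -> h <= G2 -> G1 `|` G2 \in Gs.
Proof.
move=> G1s G2s h0 hG1 hG2; set X := G1 `|` G2; set C := [set G in Gs | G <= X].
have X0 : X != \bot by apply: contraNneq h0 => X0; rewrite -lex0 -X0 lexUl.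
have [F1 F1M G1F1] : exists2 F1, F1 \in maxelts C & G1 <= F1.
  by apply: exists_maxelts_ge; rewrite inE G1s leUl.
have [F2 F2M G2F2] : exists2 F2, F2 \in maxelts C & G2 <= F2.
  by apply: exists_maxelts_ge; rewrite inE G2s leUr.
have [eF | F12] := eqVneq F1 F2.
  have := subsetP (maxelts_sub C) _ F1M; rewrite inE => /andP [F1s F1X].
  suff -> : X = F1 by [].
  by apply/eqP; rewrite eq_le F1X leUx G1F1 eF G2F2.
have := maxelts_lower_bound_bot X0 F1M F2M F12 (le_trans hG1 G1F1) (le_trans hG2 G2F2).
by move/eqP; rewrite (negbTE h0).
Qed.

Lemma atoms_sub_building_set : atoms \subset Gs.
Proof.
apply/subsetP => H; rewrite inE => /andP [botH /forallP Hatom]; apply: contraT => HNGs.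
have H0 : H != \bot by rewrite lt_def in botH; case/andP: botH.
have [phi [_ phi_onto _]] := Gs_building.2 H H0.
set M := maxelts _ in phi_onto.
have M0 : M = set0.
  apply/setP => G; rewrite in_set0; apply/negP => /(subsetP (maxelts_sub _)).
  rewrite inE => /andP [GGs GH].
  have GltH : G < H by rewrite lt_neqAle GH andbT; apply: contraNneq HNGs => <-.
  have botG : \bot < G.
    by rewrite lt_def le0x andbT; apply: contraNneq bot_notin_building_set => <-.
  by move: (Hatom G); rewrite botG GltH.
have phi_const Z : Z <= H -> Z = phi [ffun=> \bot].
  move=> ZH; have /imsetP [f fM ->] : Z \in [set phi f | f in prodint M].
    by rewrite phi_onto inE.
  congr phi; apply/ffunP => G; rewrite ffunE.
  by move: fM; rewrite M0 inE => /forallP /(_ G); rewrite in_set0 => /eqP.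
by move: H0; rewrite (phi_const H (lexx H)) -(phi_const \bot (le0x H)) eqxx.
Qed.

End BuildingSets.

Section Distance.
Local Open Scope order_scope.
Context {disp : Order.disp_t} {L : finTBLatticeType disp}.
Implicit Types (A B X Y : L) (S : {set L}).

Lemma dist_le X Y S : S \subset atoms -> Y = X `|` \join_(a in S) a ->
  (dist X Y <= #|S|)%N.
Proof.
move=> Sa eY; rewrite /dist -minEnat -leEnat.
by apply: bigmin_le_cond; rewrite Sa eY eqxx.
Qed.

Lemma dist_join_le A B G S a : S \subset atoms -> B = A `|` \join_(x in S) x ->
  a \in S -> a <= G -> (dist (A `|` G) (B `|` G) <= #|S :\ a|)%N.
Proof.
move=> Sa eB aS aG; apply: dist_le; first exact: subset_trans (subD1set S a) Sa.
by rewrite eB (big_setD1 a aS) /= -[in RHS](join_r aG) !joinA joinAC.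
Qed.

Hypothesis L_atomic : atomic (L := L).

Lemma dist_attained X Y : X <= Y ->
  exists S, [/\ S \subset atoms, Y = X `|` \join_(a in S) a & #|S| = dist X Y].
Proof.
move=> XY; have [S0 [S0a eS0]] := L_atomic Y.
pose P S := (S \subset atoms) && (Y == X `|` \join_(a in S) a).
have PS0 : P S0 by rewrite /P S0a -eS0 (join_r XY) eqxx.
case: (arg_minnP (fun S => #|S|) PS0) => S /andP [Sa /eqP eY] Smin.
exists S; split => //; apply/eqP; rewrite eqn_leq dist_le //=.
rewrite andbT /dist; apply: (big_ind (fun v => #|S| <= v)%N) => //; first exact: max_card.
by move=> u v Su Sv; rewrite leq_min Su Sv.
Qed.

Lemma dist_gt0 X Y : X < Y -> (0 < dist X Y)%N.
Proof.
move=> XY; have [S [_ eY cS]] := dist_attained (ltW XY).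
rewrite -cS card_gt0; apply: contraTneq XY => S0.
by rewrite eY S0 big_set0 joinx0 ltxx.
Qed.

Lemma dist_bot_atom (H : L) : H \in atoms -> dist \bot H = 1%N.
Proof.
move=> Ha; have botH : \bot < H by move: Ha; rewrite inE => /andP [].
apply/eqP; rewrite eqn_leq dist_gt0 // andbT -(cards1 H).
by rewrite dist_le ?sub1set // big_set1 join0x.
Qed.

End Distance.

Section Ideals.
Local Open Scope ring_scope.
Context {disp : Order.disp_t} {L : finTBLatticeType disp} (Gs : {set L}).
Implicit Types (P Q : PR Gs -> Prop) (p q : PR Gs).

Lemma in_ideal0 P : in_ideal P 0.
Proof. by exists [::]; rewrite big_nil. Qed.

Lemma in_idealD P p q : in_ideal P p -> in_ideal P q -> in_ideal P (p + q).
Proof.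
move=> [s [sP ->]] [t [tP ->]]; exists (s ++ t); rewrite big_cat; split => //.
by move=> c; rewrite mem_cat => /orP [/sP | /tP].
Qed.

Lemma in_idealMl P p q : in_ideal P p -> in_ideal P (q * p).
Proof.
move=> [s [sP ->]]; exists [seq (q * c.1, c.2) | c <- s]; split.
  by move=> c /mapP [c' /sP c'P ->].
by rewrite big_map mulr_sumr; apply: eq_bigr => c _; rewrite mulrA.
Qed.

Lemma in_idealMr P p q : in_ideal P p -> in_ideal P (p * q).
Proof. by rewrite mulrC; apply: in_idealMl. Qed.

Lemma in_idealB P p q : in_ideal P p -> in_ideal P q -> in_ideal P (p - q).
Proof. by move=> Pp Pq; rewrite -mulN1r; apply/in_idealD/in_idealMl. Qed.

Lemma in_ideal_gen P p : P p -> in_ideal P p.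
Proof.
move=> Pp; exists [:: (1, p)]; rewrite big_seq1 mul1r; split => //.
by move=> c; rewrite inE => /eqP ->.
Qed.

Lemma in_ideal_sum P (I : Type) (r : seq I) (A : pred I) (F : I -> PR Gs) :
  (forall i, A i -> in_ideal P (F i)) -> in_ideal P (\sum_(i <- r | A i) F i).
Proof. by move=> PF; elim/big_ind: _ => //; [apply: in_ideal0 | apply: in_idealD]. Qed.

Lemma in_ideal_trans P Q p : (forall q, P q -> in_ideal Q q) ->
  in_ideal P p -> in_ideal Q p.
Proof.
move=> PQ [s [sP ->]]; rewrite big_seq.
by apply: in_ideal_sum => c /sP /PQ; apply: in_idealMl.
Qed.

Lemma monomU1 (S : {set L}) (G : L) : G \notin S ->
  monom Gs (G |: S) = xv Gs G * monom Gs S.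
Proof. by move=> GS; rewrite /monom big_setU1. Qed.

Lemma monom2 (G H : L) : G != H -> monom Gs [set G; H] = xv Gs G * xv Gs H.
Proof. by move=> GH; rewrite monomU1 ?inE // /monom big_set1. Qed.

Lemma upsumB (X Y : L) : (X <= Y)%O ->
  upsum Gs X - upsum Gs Y = \sum_(G in Gs | (X <= G)%O && ~~ (Y <= G)%O) xv Gs G.
Proof.
move=> XY; rewrite /upsum (bigID (fun G => (Y <= G)%O)) /= addrAC.
rewrite [X in X - _](_ : _ = upsum Gs Y) ?subrr ?add0r; last first.
  apply: eq_bigl => G; rewrite -andbA; case YG: (Y <= G)%O; rewrite ?andbF //.
  by rewrite (le_trans XY YG) andbT.
by apply: eq_bigl => G; rewrite andbA.
Qed.

End Ideals.

Section Generators.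
Local Open Scope ring_scope.
Context {disp : Order.disp_t} {L : finTBLatticeType disp} (Gs : {set L}).
Hypothesis L_atomic : atomic (L := L).
Hypothesis Gs_building : building_set Gs.
Local Notation I := (in_ideal (@gens_orig _ _ Gs)).

Lemma monom_in_I (S : {set L}) : S \subset Gs -> ~ nested Gs S -> I (monom Gs S).
Proof. by move=> SGs nS; apply: in_ideal_gen; left; exists S. Qed.

Lemma upsum_atom_in_I (H : L) : H \in atoms -> I (upsum Gs H).
Proof. by move=> Ha; apply: in_ideal_gen; right; exists H. Qed.

(* The join of G and G' lies in Gs, so the pair {G, G'} is not nested. *)
Lemma incomparable_xv_mul_in_I (G G' h : L) : G \in Gs -> G' \in Gs ->
    h != \bot%O -> (h <= G)%O -> (h <= G')%O -> ~~ ((G <= G')%O || (G' <= G)%O) ->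
  I (xv Gs G * xv Gs G').
Proof.
move=> GGs G'Gs h0 hG hG' GG'.
have GNG' : G != G' by apply: contraNneq GG' => ->; rewrite lexx.
rewrite -monom2 //; apply: monom_in_I => [|[_ nested2]].
  by apply/subsetP => y; rewrite !inE => /orP [] /eqP ->.
suff : (\join_(y in [set G; G']) y)%O \notin Gs.
  by rewrite big_setU1 ?inE // big_set1 (building_set_join Gs_building GGs G'Gs h0 hG hG').
apply: nested2 => //; first by rewrite cards2 GNG'.
by move=> y z; rewrite !inE => /orP [] /eqP -> /orP [] /eqP ->; rewrite ?eqxx // orbC.
Qed.

Lemma xv_mul_upsumX_join_in_I (G B h : L) n : G \in Gs -> h != \bot%O ->
    (h <= G)%O -> (h <= B)%O -> ~~ (B <= G)%O ->
  I (xv Gs G * (upsum Gs B ^+ n - upsum Gs (B `|` G)%O ^+ n)).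
Proof.
move=> GGs h0 hG hB BNG; rewrite subrXX mulrA; apply: in_idealMr.
rewrite upsumB ?leUl // mulr_sumr.
apply: in_ideal_sum => G' /andP [G'Gs /andP [BG' BGNG']].
apply: (incomparable_xv_mul_in_I GGs G'Gs h0 hG (le_trans hB BG')).
rewrite negb_or; apply/andP; split; first by apply: contra BGNG' => GG'; rewrite leUx BG'.
by apply: contra BNG; apply: le_trans.
Qed.

Lemma nested_join_lt (Hs : {set L}) (G B : L) : nested Gs (G |: Hs) ->
    (B `|` G)%O \in Gs -> (\join_(y in Hs) y <= B)%O ->
    ~~ (G <= \join_(y in Hs) y)%O -> ~~ (B <= G)%O ->
  (\join_(y in G |: Hs) y < B `|` G)%O.
Proof.
move=> nGHs BGGs AB GNA BNG.
have GNHs : G \notin Hs by apply: contra GNA => GHs; apply: joins_sup.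
have A'BG : (\join_(y in G |: Hs) y <= B `|` G)%O.
  by rewrite big_setU1 //= leUx leUr (le_trans AB) ?leUl.
rewrite lt_neqAle A'BG andbT; apply/eqP => eA'.
have := nested_join_mem (bot_notin_building_set Gs_building) nGHs.
rewrite eA' => /(_ BGGs); rewrite in_setU1 => /orP [/eqP BG_G | BGHs].
  by move: BNG; rewrite -BG_G leUl.
by move: GNA; rewrite (le_trans (leUr G B) (joins_sup _ BGHs)).
Qed.

(* Stated for every exponent e >= d and for the monomial of all of Hs, which is
   what makes the induction on e close. *)
Lemma nested_monom_upsumX_in_I e (Hs : {set L}) (B : L) : nested Gs Hs -> B \in Gs ->
    (\join_(y in Hs) y < B)%O -> (dist (\join_(y in Hs) y)%O B <= e)%N ->
  I (monom Gs Hs * upsum Gs B ^+ e).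
Proof.
elim: e Hs B => [|e IH] Hs B nHs BGs; set A := (\join_(y in Hs) y)%O => AB.
  by rewrite leqn0 (gtn_eqF (dist_gt0 L_atomic AB)).
move=> dAB; have [S [Sa eB cS]] := dist_attained L_atomic (ltW AB).
have [a aS] : exists a, a \in S by apply/set0Pn; rewrite -card_gt0 cS dist_gt0.
have a0 : a != \bot%O.
  by move: (subsetP Sa a aS); rewrite inE lt_def => /andP [/andP [] ].
have aB : (a <= B)%O by rewrite eB lexUr // (joins_sup _ aS).
have cSa : (#|S :\ a| <= e)%N by move: dAB; rewrite -cS (cardsD1 a S) aS.
rewrite exprSr; set u := upsum Gs B ^+ e.
rewrite -(subKr (upsum Gs a) (upsum Gs B)) upsumB // mulrA mulrBr.
apply: in_idealB; first exact/in_idealMl/upsum_atom_in_I/(subsetP Sa).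
rewrite mulr_sumr; apply: in_ideal_sum => G /andP [GGs /andP [aG BNG]].
set B' := (B `|` G)%O.
have B'Gs : B' \in Gs := building_set_join Gs_building BGs GGs a0 aB aG.
have dA'B' := dist_join_le Sa eB aS aG.
have GNA : ~~ (G <= A)%O.
  apply/negP => GA; move: dA'B'.
  by rewrite (join_l GA) /B' (join_l (le_trans GA (ltW AB))) -cS (cardsD1 a S) aS ltnn.
have GNHs : G \notin Hs by apply: contra GNA => GHs; apply: joins_sup.
have -> : monom Gs Hs * u * xv Gs G = monom Gs Hs * (xv Gs G * (u - upsum Gs B' ^+ e))
                                      + monom Gs (G |: Hs) * upsum Gs B' ^+ e.
  by rewrite monomU1 //; ring.
apply: in_idealD; first exact/in_idealMl/(xv_mul_upsumX_join_in_I _ GGs a0 aG aB BNG).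
have GHsGs : G |: Hs \subset Gs by rewrite subUset sub1set GGs nHs.1.
have [nGHs | nnGHs] := classic (nested Gs (G |: Hs)); last first.
  exact/in_idealMr/monom_in_I.
apply: IH => //; first exact: nested_join_lt (ltW AB) GNA BNG.
by rewrite big_setU1 //= joinC (leq_trans dA'B' cSa).
Qed.

Lemma gens_new_in_I (p : PR Gs) : gens_new p -> I p.
Proof.
case=> [[S [SGs [nS ->]]] | [Hs [B [nHs [BGs /= [AB ->]]]]]].
  exact: monom_in_I.
by apply: nested_monom_upsumX_in_I => //; apply: nested_sub (maxelts_sub Hs) nHs.
Qed.

Lemma upsum_atom_gens_new (H : L) : H \in atoms -> gens_new (upsum Gs H).
Proof.
move=> Ha; right; exists set0, H.
have botH : (\bot < H)%O by move: Ha; rewrite inE => /andP [].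
have max0 : maxelts (set0 : {set L}) = set0 by apply/eqP; rewrite -subset0 maxelts_sub.
split; first exact: nested0.
split; first exact: (subsetP (atoms_sub_building_set Gs_building)).
by rewrite /= max0 big_set0 dist_bot_atom // expr1 /monom big_set0 mul1r.
Qed.

End Generators.

Unset Implicit Arguments.

Theorem theorem3p2 (disp : Order.disp_t) (L : finTBLatticeType disp)
    (Gs : {set L}) :
  atomic (L := L) -> building_set Gs ->
  forall p : PR Gs, in_ideal (@gens_orig _ _ Gs) p <-> in_ideal (@gens_new _ _ Gs) p.
Proof.
move=> L_atomic Gs_building p; split; apply: in_ideal_trans => q.
  case=> [monom_q | [H [Ha ->]]]; first by apply: in_ideal_gen; left.
  exact/in_ideal_gen/upsum_atom_gens_new.
exact: gens_new_in_I.
Qed.
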